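(* Let $G$ be a complete geometric graph and let $B$ be a blocker for $\mathcal{T}_{\leq 3}(G)$. Let $a,b$ be two leaves of $B$ with leaf edges $[a,c]$ and $[b,d]$, respectively. If $a,b,c,d$ are mutually distinct, then $a,b,d,c$ are in convex position and, in this cyclic order, are the vertices of a convex quadrilateral (i.e., its sides are $[a,b],[b,d],[d,c],[c,a]$).
   Context: A geometric graph is a graph whose vertices are points in the plane in general position (no three collinear) and whose edges are straight segments between pairs of vertices; $G$ is complete if all pairs of vertices are joined. $\mathcal{T}_{\leq k}(G)$ denotes the family of all simple (non-crossing) spanning trees of $G$ of (graph) diameter at most $k$. A subgraph $B$ blocks a family $\mathcal{F}$ of subgraphs if it shares at least one edge with every member of $\mathcal{F}$; a blocker of $\mathcal{F}$ is a subgraph that blocks $\mathcal{F}$ and has the smallest possible number of edges among all subgraphs blocking $\mathcal{F}$. A leaf of $B$ is a vertex of degree 1 in $B$, and its leaf edge is the unique edge of $B$ containing it. *)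

From HB Require Import structures.
From mathcomp Require Import all_boot all_order all_algebra.
Set Implicit Arguments. Unset Strict Implicit. Unset Printing Implicit Defensive.
Import Order.TTheory GRing.Theory Num.Theory.
Local Open Scope ring_scope.

Section GeomGraph.
Variable R : realFieldType.
Variable T : finType.
Variable p : T -> R * R.

Definition orient (u v w : R * R) : R :=
  (v.1 - u.1) * (w.2 - u.2) - (v.2 - u.2) * (w.1 - u.1).

Definition general_position : Prop :=
  injective p /\
  forall x y z : T, x != y -> y != z -> x != z -> orient (p x) (p y) (p z) != 0.

Definition edgesG : {set {set T}} := [set e : {set T} | #|e| == 2%N].
Definition subgraph (H : {set {set T}}) : Prop := H \subset edgesG.

Definition adj (H : {set {set T}}) : rel T := fun u v => (u != v) && ([set u; v] \in H).

Definition segs_meet (x y z w : T) : Prop :=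
  exists t s : R, [/\ 0 <= t <= 1, 0 <= s <= 1 &
    ((1 - t) * (p x).1 + t * (p y).1 = (1 - s) * (p z).1 + s * (p w).1 /\
     (1 - t) * (p x).2 + t * (p y).2 = (1 - s) * (p z).2 + s * (p w).2)].

(* simple = no two edges with disjoint endpoints cross *)
Definition noncrossing (H : {set {set T}}) : Prop :=
  forall x y z w : T, [set x; y] \in H -> [set z; w] \in H ->
    x != y -> z != w -> x != z -> x != w -> y != z -> y != w ->
    ~ segs_meet x y z w.

Definition connected (H : {set {set T}}) : Prop :=
  forall u v : T, connect (adj H) u v.

Definition acyclic (H : {set {set T}}) : Prop :=
  forall s : seq T, (3 <= size s)%N -> uniq s -> ~~ cycle (adj H) s.

Definition spanning_tree (H : {set {set T}}) : Prop :=
  subgraph H /\ connected H /\ acyclic H.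

Definition diam_le (H : {set {set T}}) (k : nat) : Prop :=
  forall u v : T, exists s : seq T,
    [/\ path (adj H) u s, last u s = v & (size s <= k)%N].

Definition simple_trees_diam_le (k : nat) (H : {set {set T}}) : Prop :=
  spanning_tree H /\ noncrossing H /\ diam_le H k.

Definition blocks (B : {set {set T}}) (F : {set {set T}} -> Prop) : Prop :=
  forall H, F H -> exists2 e, e \in B & e \in H.

Definition blocker (B : {set {set T}}) (F : {set {set T}} -> Prop) : Prop :=
  [/\ subgraph B, blocks B F &
      forall B', subgraph B' -> blocks B' F -> (#|B| <= #|B'|)%N].

Definition leaf (B : {set {set T}}) (a : T) : Prop :=
  #|[set e in B | a \in e]| = 1%N.

Definition convex_quad (x1 x2 x3 x4 : T) : Prop :=
  let o := orient in
  (0 < o (p x1) (p x2) (p x3) /\ 0 < o (p x2) (p x3) (p x4) /\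
   0 < o (p x3) (p x4) (p x1) /\ 0 < o (p x4) (p x1) (p x2)) \/
  (o (p x1) (p x2) (p x3) < 0 /\ o (p x2) (p x3) (p x4) < 0 /\
   o (p x3) (p x4) (p x1) < 0 /\ o (p x4) (p x1) (p x2) < 0).

End GeomGraph.

From HB Require Import structures.
From mathcomp Require Import all_boot all_order all_algebra ring lra zify.
Import Order.TTheory GRing.Theory Num.Theory.
Set Implicit Arguments. Unset Strict Implicit. Unset Printing Implicit Defensive.

(* If a, b, d, c were not the consecutive vertices of a convex quadrilateral,
   one could build a noncrossing "double star": the edge ab together with an
   edge from every other vertex to a or to b, where c hangs from b and d hangs
   from a.  Such a spanning tree has diameter at most 3, and each of its edges
   contains a or b; as the only edges of B at the leaves a and b are ac and bd,
   B would miss it, so B would not block the family.  The vertices hung from b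
   are c and those in the open wedge at b between the ray bc and the extension
   of ab beyond b; this partition is always noncrossing, so the blocking
   property forces d into that wedge, and symmetrically c into the wedge at a
   between ad and the extension of ba.  These two sign conditions are exactly
   the convexity of abdc. *)

Local Open Scope ring_scope.

Section Orientation.
Variable R : realFieldType.
Implicit Types (u v w P Q : R * R) (s t x y z : R).

Lemma orient_rotl u v w : orient u v w = orient v w u.
Proof. by rewrite /orient; ring. Qed.

Lemma orient_swap23 u v w : orient u w v = - orient u v w.
Proof. by rewrite /orient; ring. Qed.

Lemma orient_repeat13 u v : orient u v u = 0.
Proof. by rewrite /orient; ring. Qed.

Lemma orient_repeat23 u v : orient u v v = 0.
Proof. by rewrite /orient; ring. Qed.

Lemma orient_segment u v P Q t :
  orient u v ((1 - t) * P.1 + t * Q.1, (1 - t) * P.2 + t * Q.2) =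
  (1 - t) * orient u v P + t * orient u v Q.
Proof. by rewrite /orient /=; ring. Qed.

Lemma orient_inj P Q : (forall u v, orient u v P = orient u v Q) -> P = Q.
Proof.
case: P Q => [P1 P2] [Q1 Q2] E.
have := E (0, 0) (1, 0); have := E (0, 0) (0, 1); rewrite /orient /= => E1 E2.
by congr pair; lra.
Qed.

(* A three-term Grassmann-Pluecker relation. *)
Lemma orient_plucker (a b c x y : R * R) :
  orient b y c * orient a b x + orient b c x * orient a b y +
  orient b x y * orient a b c = 0.
Proof. by rewrite /orient; ring. Qed.

Lemma mul_gt0_cases x y : 0 < x * y -> (0 < x /\ 0 < y) \/ (x < 0 /\ y < 0).
Proof.
case: (ltgtP x 0) => [xn|xp|->]; last by rewrite mul0r ltxx.
- by rewrite nmulr_rgt0 //; right.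
- by rewrite pmulr_rgt0 //; left.
Qed.

Lemma mul_lt0_cases x y : x * y < 0 -> (0 < x /\ y < 0) \/ (x < 0 /\ 0 < y).
Proof.
case: (ltgtP x 0) => [xn|xp|->]; last by rewrite mul0r ltxx.
- by rewrite nmulr_rlt0 //; right.
- by rewrite pmulr_rlt0 //; left.
Qed.

Lemma same_sign_trans s x y : 0 < s * x -> 0 < s * y -> 0 < x * y.
Proof. by move=> /mul_gt0_cases[] [? ?] /mul_gt0_cases[] [? ?]; nra. Qed.

Lemma opposite_sign_trans s x y : 0 < s * x -> s * y < 0 -> x * y < 0.
Proof. by move=> /mul_gt0_cases[] [? ?] /mul_lt0_cases[] [? ?]; nra. Qed.

Lemma vanishing_sum_sign s x1 y1 x2 y2 z : x1 * y1 + x2 * y2 + z * s = 0 ->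
  0 < s * x1 -> 0 < s * y1 -> 0 < s * x2 -> 0 < s * y2 -> s * z < 0.
Proof. by move=> *; nra. Qed.

Lemma convex_weights_neq0 s x y : 0 <= s <= 1 -> 0 < x * y ->
  (1 - s) * x + s * y != 0.
Proof.
move=> /andP[s0 s1] /mul_gt0_cases xy; apply/eqP => E.
by case: xy => -[x0 y0]; nra.
Qed.

Lemma weight_eq0 t s x y : 0 <= t -> 0 <= s -> x * y < 0 -> t * x = s * y -> t = 0.
Proof.
move=> t0 s0 /mul_lt0_cases xy E.
have tx0 : t * x = 0 by case: xy => -[x0 y0]; nra.
move/eqP: tx0; rewrite mulf_eq0 => /orP[/eqP //|/eqP x0].
by case: xy; rewrite x0 ltxx => -[].
Qed.

End Orientation.

Section Segments.
Variables (R : realFieldType) (T : finType) (p : T -> R * R).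
Local Notation O u v w := (orient (p u) (p v) (p w)).

Lemma segs_meet_revl x y z w : segs_meet p x y z w -> segs_meet p y x z w.
Proof.
case=> t [s [/andP[t0 t1] hs [e1 e2]]]; exists (1 - t), s; split => //.
  by apply/andP; split; lra.
by split; [rewrite -e1|rewrite -e2]; ring.
Qed.

Lemma segs_meetC x y z w : segs_meet p x y z w -> segs_meet p z w x y.
Proof. by case=> t [s [ht hs [e1 e2]]]; exists s, t. Qed.

Lemma segs_meet_revr x y z w : segs_meet p x y z w -> segs_meet p x y w z.
Proof. by move=> /segs_meetC /segs_meet_revl /segs_meetC. Qed.

Lemma segs_meet_orient x y z w : segs_meet p x y z w -> exists t s,
  [/\ 0 <= t <= 1, 0 <= s <= 1 &
   forall u v, (1 - t) * orient u v (p x) + t * orient u v (p y) =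
               (1 - s) * orient u v (p z) + s * orient u v (p w)].
Proof.
case=> t [s [ht hs [e1 e2]]]; exists t, s; split => // u v.
by rewrite -!orient_segment e1 e2.
Qed.

Lemma segs_meet_same_side x y u v : 0 < O x y u * O x y v -> ~ segs_meet p x y u v.
Proof.
move=> uv /segs_meet_orient[t [s [_ hs E]]].
have := E (p x) (p y); rewrite orient_repeat13 orient_repeat23 !mulr0 addr0.
by move/esym/eqP; apply/negP: (convex_weights_neq0 hs uv).
Qed.

Lemma segs_meet_opposite_sides a b x y : injective p -> a != b ->
  O a b x * O a b y < 0 -> ~ segs_meet p a x b y.
Proof.
move=> inj_p ab xy /segs_meet_orient[t [s [/andP[t0 _] /andP[s0 _] E]]].
have Eab : t * O a b x = s * O a b y.
  by have := E (p a) (p b); rewrite orient_repeat13 orient_repeat23 !mulr0 !add0r.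
have t_eq0 := weight_eq0 t0 s0 xy Eab.
have s_eq0 : s = 0 by apply: (weight_eq0 s0 t0 _ (esym Eab)); rewrite mulrC.
move/eqP: ab; apply; apply: inj_p; apply: orient_inj => u v.
by have := E u v; rewrite t_eq0 s_eq0 subr0 !mul1r !mul0r !addr0.
Qed.

End Segments.

Section Graphs.
Variable T : finType.
Implicit Types (B H : {set {set T}}) (u v : T).

Lemma adjC H u v : adj H u v = adj H v u.
Proof. by rewrite /adj eq_sym setUC. Qed.

Lemma leaf_edge_unique B v e1 e2 : leaf B v -> e1 \in B -> e2 \in B ->
  v \in e1 -> v \in e2 -> e1 = e2.
Proof.
move=> /eqP/cards1P[e Be] e1B e2B v1 v2.
have : e1 \in [set e in B | v \in e] by rewrite inE e1B v1.
have : e2 \in [set e in B | v \in e] by rewrite inE e2B v2.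
by rewrite Be => /set1P-> /set1P->.
Qed.

End Graphs.

Section DoubleStar.
Variables (T : finType) (a b : T) (side : pred T).
Hypothesis ab : a != b.

Definition hub u := if u == a then b else if u == b then a else if side u then b else a.

Definition double_star : {set {set T}} := [set [set u; hub u] | u : T].

Definition sides_separated (R : realFieldType) (p : T -> R * R) : Prop :=
  forall x y, x != a -> x != b -> y != a -> y != b -> ~~ side x -> side y ->
    ~ segs_meet p a x b y.

Lemma hub_a : hub a = b.
Proof. by rewrite /hub eqxx. Qed.

Lemma hub_b : hub b = a.
Proof. by rewrite /hub eq_sym (negbTE ab) eqxx. Qed.

Lemma hub_other u : u != a -> u != b -> hub u = if side u then b else a.
Proof. by move=> ua ub; rewrite /hub (negbTE ua) (negbTE ub). Qed.

Lemma hub_ab u : hub u = a \/ hub u = b.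
Proof. by rewrite /hub; repeat case: ifP => _; auto. Qed.

Lemma hub_neq u : u != hub u.
Proof.
rewrite /hub; case: ifP => [/eqP->|ua] //; case: ifP => [/eqP->|ub].
  by rewrite eq_sym.
by case: ifP; rewrite ?ua ?ub.
Qed.

Lemma adj_double_star x y : adj double_star x y = (y == hub x) || (x == hub y).
Proof.
apply/andP/idP => [[xy /imsetP[u _ E]]|/orP[]/eqP->].
- move: xy; have : x \in [set u; hub u] by rewrite -E set21.
  have : y \in [set u; hub u] by rewrite -E set22.
  by rewrite !inE => /orP[]/eqP-> /orP[]/eqP->; rewrite ?eqxx ?orbT.
- by split; [exact: hub_neq|apply/imsetP; exists x].
- by split; [rewrite eq_sym hub_neq|apply/imsetP; exists y; rewrite // setUC].
Qed.

Lemma adj_hub u : adj double_star u (hub u).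
Proof. by rewrite adj_double_star eqxx. Qed.

Lemma adj_hubs u v : hub u != hub v -> adj double_star (hub u) (hub v).
Proof.
case: (hub_ab u) (hub_ab v) => -> [] ->; rewrite ?eqxx // => _.
- by rewrite -{1}hub_a adj_hub.
- by rewrite -{1}hub_b adj_hub.
Qed.

Lemma adj_double_star_other x y : x != a -> x != b -> adj double_star x y -> y = hub x.
Proof.
move=> xa xb; rewrite adj_double_star => /orP[/eqP //|/eqP x_hub].
by case: (hub_ab y) x_hub => -> x_eq; rewrite x_eq eqxx in xa xb.
Qed.

Lemma double_star_diam : diam_le double_star 3.
Proof.
move=> u v; have v_hub : adj double_star (hub v) v by rewrite adjC adj_hub.
have [e|ne] := eqVneq (hub u) (hub v).
- by exists [:: hub u; v]; split => //=; rewrite adj_hub e v_hub.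
- by exists [:: hub u; hub v; v]; split => //=; rewrite adj_hub adj_hubs ?v_hub.
Qed.

(* A cycle through a vertex x other than a and b would leave x twice towards hub x. *)
Lemma double_star_acyclic : acyclic double_star.
Proof.
move=> s s_size s_uniq; apply/negP => s_cycle.
have [x xs /andP[xa xb]] : exists2 x, x \in s & (x != a) && (x != b).
  apply/hasP/negPn/negP => /hasPn s_ab.
  have : (size s <= size [:: a; b])%N.
    by apply: uniq_leq_size => // z /s_ab; rewrite negb_and !negbK !inE.
  by rewrite /=; lia.
case: (rot_to xs) => i s' s_rot.
have := s_size; have := s_uniq; move: s_cycle.
rewrite -(rot_cycle i) -(rot_uniq i) -(size_rot i) s_rot.
case: s' {s_rot} => [|y [|z s']] //.
rewrite /cycle rcons_path => /andP[/andP[xy _] zx] /andP[_ /andP[y_notin _]] _.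
have x_last : adj double_star x (last z s') by rewrite adjC.
have := mem_last z s'; rewrite (adj_double_star_other xa xb x_last).
by rewrite -(adj_double_star_other xa xb xy) (negbTE y_notin).
Qed.

Lemma double_star_noncrossing (R : realFieldType) (p : T -> R * R) :
  sides_separated p -> noncrossing p double_star.
Proof.
move=> separated.
have hub_edges_ab u v : hub u = a -> hub v = b -> u != b -> v != a ->
    ~ segs_meet p u a v b.
  move=> ua vb ub va.
  have ua' : u != a by rewrite -ua hub_neq.
  have vb' : v != b by rewrite -vb hub_neq.
  have su : ~~ side u.
    by move: ua; rewrite hub_other //; case: (side u) => // /eqP; rewrite eq_sym (negbTE ab).
  have sv : side v.
    by move: vb; rewrite hub_other //; case: (side v) => // /eqP; rewrite (negbTE ab).
  by move/segs_meet_revl/segs_meet_revr; apply: separated.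
have hub_edges u v : hub u != hub v -> u != hub v -> v != hub u ->
    ~ segs_meet p u (hub u) v (hub v).
  case: (hub_ab u) (hub_ab v) => hu [] hv; rewrite hu hv ?eqxx // => _ uv vu.
  - exact: hub_edges_ab.
  - by move/segs_meetC; apply: hub_edges_ab.
move=> x y z w exy ezw xy zw xz xw yz yw.
have exy' : (y == hub x) || (x == hub y) by rewrite -adj_double_star; apply/andP.
have ezw' : (w == hub z) || (z == hub w) by rewrite -adj_double_star; apply/andP.
case/orP: exy' => /eqP exy'; case/orP: ezw' => /eqP ezw'; subst.
- by apply: hub_edges; rewrite // eq_sym.
- by move/segs_meet_revr; apply: hub_edges; rewrite // eq_sym.
- by move/segs_meet_revl; apply: hub_edges; rewrite // eq_sym.
- by move/segs_meet_revl/segs_meet_revr; apply: hub_edges; rewrite // eq_sym.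
Qed.

Lemma double_star_simple_tree (R : realFieldType) (p : T -> R * R) :
  sides_separated p -> simple_trees_diam_le p 3 double_star.
Proof.
move=> separated; split; [split; [|split]|split].
- by apply/subsetP => _ /imsetP[u _ ->]; rewrite inE cards2 hub_neq.
- move=> u v; have [s [us su _]] := double_star_diam u v.
  by apply/connectP; exists s.
- exact: double_star_acyclic.
- exact: double_star_noncrossing.
- exact: double_star_diam.
Qed.

Lemma double_star_avoids_leaves (B : {set {set T}}) (c d : T) :
  leaf B a -> [set a; c] \in B -> leaf B b -> [set b; d] \in B ->
  c != a -> c != b -> d != a -> d != b -> side c -> ~~ side d ->
  ~ exists2 e, e \in B & e \in double_star.
Proof.
move=> la acB lb bdB ca cb da db sc sd.
case=> e eB eH; have /imsetP[u _ e_u] := eH.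
case: (hub_ab u) => hu.
- have ae : a \in e by rewrite e_u hu set22.
  have : adj double_star a c.
    by rewrite /adj eq_sym ca (leaf_edge_unique la acB eB (set21 _ _) ae).
  by rewrite adj_double_star hub_a hub_other // sc (negbTE cb) (negbTE ab).
- have be : b \in e by rewrite e_u hu set22.
  have : adj double_star b d.
    by rewrite /adj eq_sym db (leaf_edge_unique lb bdB eB (set21 _ _) be).
  by rewrite adj_double_star hub_b hub_other // (negbTE sd) (negbTE da) eq_sym (negbTE ab).
Qed.

End DoubleStar.

Section Wedge.
Variables (R : realFieldType) (T : finType) (p : T -> R * R).
Hypothesis gp : general_position p.
Local Notation O u v w := (orient (p u) (p v) (p w)).

(* [wedge a b c] holds at c and at the vertices strictly inside the angle at b
   formed by the ray bc and the extension of ab beyond b. *)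
Definition wedge (a b c : T) : pred T :=
  fun y => (y == c) || (0 < O a b c * O a b y) && (0 < O a b c * O b y c).

Lemma orient_neq0 x y z : x != y -> y != z -> x != z -> O x y z != 0.
Proof. exact: gp.2. Qed.

Lemma wedge_separated a b c : a != b -> b != c -> a != c ->
  sides_separated a b (wedge a b c) p.
Proof.
move=> ab bc ac x y xa xb ya yb x_out y_in.
have s0 := orient_neq0 ab bc ac.
have sy : 0 < O a b c * O a b y.
  by case/orP: y_in => [/eqP->|/andP[] //]; rewrite -expr2 exprn_even_gt0.
have ax : a != x by rewrite eq_sym.
have bx : b != x by rewrite eq_sym.
have := mulf_neq0 s0 (orient_neq0 ab bx ax).
rewrite neq_lt => /orP[sx|sx].
  apply: segs_meet_opposite_sides gp.1 ab _.
  by rewrite mulrC; apply: opposite_sign_trans sy sx.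
have xc : x != c by apply: contraNneq x_out => ->; rewrite /wedge eqxx.
have scx : 0 < O a b c * O b c x.
  move: x_out; rewrite /wedge (negbTE xc) sx (orient_swap23 (p b) (p x)) mulrN oppr_gt0 /=.
  have := mulf_neq0 s0 (orient_neq0 bx xc bc).
  by rewrite neq_lt => /orP[] ->.
(* x is on the side of c but outside the wedge: by the Pluecker relation, a and
   x then lie strictly on the same side of the line by. *)
have syx : 0 < O a b c * O b y x.
  case/orP: y_in => [/eqP-> //|/andP[_ syc]].
  have := vanishing_sum_sign (orient_plucker (p a) (p b) (p c) (p x) (p y)) syc sx scx sy.
  by rewrite (orient_swap23 (p b) (p x)) mulrN oppr_gt0.
move/segs_meetC; apply: segs_meet_same_side.
by rewrite -orient_rotl; apply: same_sign_trans sy syx.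
Qed.

Lemma blocker_leaf_in_wedge (B : {set {set T}}) a b c d :
  blocks B (simple_trees_diam_le p 3) ->
  leaf B a -> [set a; c] \in B -> leaf B b -> [set b; d] \in B ->
  a != b -> a != c -> a != d -> b != c -> b != d -> c != d ->
  wedge a b c d.
Proof.
move=> blk la acB lb bdB ab ac ad bc bd cd; apply/negPn/negP => d_out.
have star_tree : simple_trees_diam_le p 3 (double_star a b (wedge a b c)).
  exact/double_star_simple_tree/wedge_separated.
apply: (double_star_avoids_leaves ab la acB lb bdB) (blk _ star_tree);
  by rewrite 1?eq_sym // /wedge eqxx.
Qed.

Lemma convex_quad_of_wedges a b c d :
  c != d -> wedge a b c d -> wedge b a d c -> convex_quad p a b d c.
Proof.
move=> cd; rewrite /wedge (negbTE cd) eq_sym (negbTE cd) /=.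
move=> /andP[abd bdc] /andP[_ adc].
have e : O b a d * O a c d = O a b d * O a d c by rewrite /orient; ring.
rewrite e in adc.
rewrite /convex_quad (orient_rotl (p c)) (orient_rotl (p d)) (orient_rotl (p c)).
case: (mul_gt0_cases abd) => -[s0 d0].
- by left; rewrite d0 -(pmulr_rgt0 _ s0) bdc -(pmulr_rgt0 _ d0) adc s0.
- by right; rewrite d0 -(nmulr_rgt0 _ s0) bdc -(nmulr_rgt0 _ d0) adc s0.
Qed.

End Wedge.

Theorem corollary1 (R : realFieldType) (T : finType) (p : T -> R * R)
  (B : {set {set T}}) (a b c d : T) :
  general_position p ->
  blocker B (simple_trees_diam_le p 3) ->
  leaf B a -> [set a; c] \in B ->
  leaf B b -> [set b; d] \in B ->
  [&& a != b, a != c, a != d, b != c, b != d & c != d] ->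
  convex_quad p a b d c.
Proof.
move=> gp [_ blk _] la acB lb bdB /and5P[ab ac ad bc /andP[bd cd]].
apply: (convex_quad_of_wedges cd).
- exact: (blocker_leaf_in_wedge gp blk la acB lb bdB ab ac ad bc bd cd).
- by apply: (blocker_leaf_in_wedge gp blk lb bdB la acB _ bd bc ad ac); rewrite eq_sym.
Qed.
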